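(* Let $G$ be a finite group with irreducible complex characters $\varphi_1,\dots,\varphi_t$, and let $Q$ be a quasigroup of order $|G|$. Then $Q$ is a balanced cover of the weighted character quasigroup of $G$ if and only if there exist pairwise disjoint subsets $S_1,\dots,S_t\subseteq Q$ with $|S_i|=\varphi_i(1)^2$ for each $i$ and $$S_i\cdot S_j=\sum_{k=1}^t\frac{\varphi_i(1)\varphi_j(1)\langle\varphi_i\cdot\varphi_j\mid\varphi_k\rangle}{\varphi_k(1)}\,S_k\qquad\text{for all }1\le i,j\le t.$$
   Context: The scalar product is $\langle\theta\mid\varphi\rangle=\frac{1}{|G|}\sum_{g\in G}\theta(g)\overline{\varphi(g)}$. The weighted character quasigroup of $G$ consists of the set $\{\varphi_1,\dots,\varphi_t\}$ with weights $w(\varphi_i)=\varphi_i(1)^2$ and multiplication function $\alpha(\varphi_i,\varphi_j,\varphi_k)=\varphi_i(1)\varphi_j(1)\varphi_k(1)\langle\varphi_i\varphi_j\mid\varphi_k\rangle$. A quasigroup $Q$ of order $|G|$ covers it if there is a surjection $f:Q\to\{\varphi_1,\dots,\varphi_t\}$ with $|f^{-1}\{\varphi_i\}|=\varphi_i(1)^2$ and $|\{(a,b)\in f^{-1}\{\varphi_i\}\times f^{-1}\{\varphi_j\} : f(ab)=\varphi_k\}|=\alpha(\varphi_i,\varphi_j,\varphi_k)$ for all $i,j,k$. The cover is balanced if, for all $i,j$ and all $q\in Q$, the number $m_q$ of pairs $(a,b)\in f^{-1}\{\varphi_i\}\times f^{-1}\{\varphi_j\}$ with $ab=q$ depends only on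 $f(q)$. For subsets (or multisubsets) $A,B$ of $Q$, $A\cdot B$ denotes the formal sum $\sum_{a\in A,b\in B}ab$ in the free $\mathbb{N}$-semimodule $\mathbb{N}Q$ on $Q$ (so it records multiplicities), and a subset $S$ is identified with $\sum_{q\in S}q$. *)

From HB Require Import structures.
From mathcomp Require Import all_boot all_order all_algebra all_fingroup all_solvable all_field all_character.
Set Implicit Arguments. Unset Strict Implicit. Unset Printing Implicit Defensive.
Import Order.TTheory GRing.Theory Num.Theory.
Local Open Scope ring_scope.

Definition quasigroup (Q : finType) (mul : Q -> Q -> Q) : Prop :=
  (forall a, bijective (mul a)) /\ (forall b, bijective (fun x => mul x b)).

Definition char_alpha (gT : finGroupType) (G : {group gT}) (i j k : Iirr G) : algC :=
  'chi_i 1%g * 'chi_j 1%g * 'chi_k 1%g * '['chi_i * 'chi_j, 'chi_k].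

(* number of pairs (a,b) in A x B with a b = q : the multiplicity of q in the
   formal sum A . B in N Q *)
Definition prod_mult (Q : finType) (mul : Q -> Q -> Q) (A B : {set Q}) (q : Q) : nat :=
  #|[set p : Q * Q | (p.1 \in A) && (p.2 \in B) && (mul p.1 p.2 == q)]|.

Definition is_cover (gT : finGroupType) (G : {group gT}) (Q : finType)
    (mul : Q -> Q -> Q) (f : Q -> Iirr G) : Prop :=
  [/\ #|Q| = #|G|,
      (forall i : Iirr G, exists q, f q = i),
      (forall i : Iirr G, (#|f @^-1: [set i]|)%:R = 'chi_i 1%g ^+ 2) &
      (forall i j k : Iirr G,
         (#|[set p : Q * Q | (f p.1 == i) && (f p.2 == j) && (f (mul p.1 p.2) == k)]|)%:R
           = char_alpha i j k)].

Definition is_balanced_cover (gT : finGroupType) (G : {group gT}) (Q : finType)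
    (mul : Q -> Q -> Q) (f : Q -> Iirr G) : Prop :=
  is_cover mul f /\
  (forall (i j : Iirr G) (q q' : Q), f q = f q' ->
     prod_mult mul (f @^-1: [set i]) (f @^-1: [set j]) q
     = prod_mult mul (f @^-1: [set i]) (f @^-1: [set j]) q').

Definition char_coef (gT : finGroupType) (G : {group gT}) (i j k : Iirr G) : algC :=
  'chi_i 1%g * 'chi_j 1%g * '['chi_i * 'chi_j, 'chi_k] / 'chi_k 1%g.

From HB Require Import structures.
From mathcomp Require Import all_boot all_order all_algebra all_fingroup all_solvable all_field all_character.
From mathcomp Require Import ring.

Set Implicit Arguments.
Unset Strict Implicit.
Unset Printing Implicit Defensive.
Import Order.TTheory GRing.Theory Num.Theory.
Local Open Scope ring_scope.

(* A cover f and a family of disjoint blocks S_i are the same data, S_i being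
   the fibre of f over phi_i; the blocks exhaust Q because
   sum_i phi_i(1)^2 = |G| = |Q|.  Counting the pairs of S_i x S_j whose
   product lies in S_k gives alpha(i,j,k) = sum_(q in S_k) m_q.  Balancedness
   says that m_q is constant on S_k, hence equal to
   alpha(i,j,k) / phi_k(1)^2, the coefficient of S_k in S_i . S_j. *)

Lemma card_pairs_mul_in (Q : finType) (mul : Q -> Q -> Q) (A B C : {set Q}) :
  #|[set p : Q * Q | (p.1 \in A) && (p.2 \in B) && (mul p.1 p.2 \in C)]|
  = (\sum_(q in C) prod_mult mul A B q)%N.
Proof.
rewrite -sum1_card (partition_big (fun p : Q * Q => mul p.1 p.2) (mem C)).
  apply: eq_bigr => q qC; rewrite /prod_mult -sum1_card; apply: eq_bigl => p.
  by rewrite !inE; case: eqP => [->|]; rewrite ?andbF // (qC : q \in C) andbT.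
by move=> p; rewrite inE => /andP[].
Qed.

Section Fibres.

Variables (I Q : finType) (f : Q -> I).

Lemma disjoint_fibres (i j : I) :
  i != j -> [disjoint f @^-1: [set i] & f @^-1: [set j]].
Proof.
move=> neq_ij; rewrite -setI_eq0; apply/eqP/setP => q.
by rewrite !inE; apply/andP => -[/eqP-> /eqP eq_ij]; rewrite eq_ij eqxx in neq_ij.
Qed.

Lemma sum_fibre_indicator (R : pzSemiRingType) (c : I -> R) (q : Q) :
  \sum_k c k * (q \in f @^-1: [set k])%:R = c (f q).
Proof.
rewrite (bigD1 (f q)) //= !inE eqxx mulr1 big1 ?addr0 // => k neq_k.
by rewrite !inE eq_sym (negbTE neq_k) mulr0.
Qed.

End Fibres.

Section Partitions.

Variables (I Q : finType) (S : I -> {set Q}).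
Hypothesis S_disjoint : forall i j, i != j -> [disjoint S i & S j].

Lemma partition_cover_card :
  (\sum_i #|S i|)%N = #|Q| -> forall q, exists i, q \in S i.
Proof.
move=> card_sum q.
have cover : \bigcup_i S i = setT.
  apply/eqP; rewrite eqEcard subsetT cardsT -card_sum /=.
  rewrite -sum1_card (partition_disjoint_bigcup _ _ S_disjoint).
  by under [X in (_ <= X)%N]eq_bigr do rewrite sum1_card.
have : q \in \bigcup_i S i by rewrite cover inE.
by case/bigcupP => i _ qSi; exists i.
Qed.

Lemma partition_fibres :
  (forall q, exists i, q \in S i) ->
  exists f : Q -> I, forall i, f @^-1: [set i] = S i.
Proof.
move=> /fin_all_exists[f fS]; exists f => i; apply/setP => q; rewrite !inE.
apply/eqP/idP => [<- // | qSi]; apply/eqP; apply: contraTT qSi => neq_fq_i.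
by rewrite (disjointFr (S_disjoint neq_fq_i) (fS q)).
Qed.

End Partitions.

Lemma char_alpha_coef (gT : finGroupType) (G : {group gT}) (i j k : Iirr G) :
  char_alpha i j k = 'chi_k 1%g ^+ 2 * char_coef i j k.
Proof.
have := irr1_neq0 k; rewrite /char_alpha /char_coef => nz_k.
by field.
Qed.

Section Cover.

Variables (gT : finGroupType) (G : {group gT}) (Q : finType).
Variables (mul : Q -> Q -> Q) (f : Q -> Iirr G).

Local Notation fibre i := (f @^-1: [set i]).

Lemma card_fibre_triples (i j k : Iirr G) :
  #|[set p : Q * Q | (f p.1 == i) && (f p.2 == j) && (f (mul p.1 p.2) == k)]|
  = (\sum_(q in fibre k) prod_mult mul (fibre i) (fibre j) q)%N.
Proof.
by rewrite -card_pairs_mul_in; apply: eq_card => p; rewrite !inE.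
Qed.

Lemma balanced_cover_prod_mult :
  is_balanced_cover mul f -> forall (i j : Iirr G) (q : Q),
  (prod_mult mul (fibre i) (fibre j) q)%:R = char_coef i j (f q).
Proof.
move=> [[_ _ card_fibre count] balanced] i j q.
have := count i j (f q); rewrite card_fibre_triples char_alpha_coef.
under eq_bigr => q' /[!inE] /eqP fq' do rewrite (balanced i j q' q fq').
rewrite sum_nat_const natrM card_fibre => /mulfI-> //.
by rewrite expf_neq0 ?irr1_neq0.
Qed.

Lemma prod_mult_balanced_cover :
  #|Q| = #|G| ->
  (forall i : Iirr G, (#|fibre i|)%:R = 'chi_i 1%g ^+ 2) ->
  (forall (i j : Iirr G) (q : Q),
     (prod_mult mul (fibre i) (fibre j) q)%:R = char_coef i j (f q)) ->
  is_balanced_cover mul f.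
Proof.
move=> card_Q card_fibre prod_coef; split; first split => //.
- move=> i; have /card_gt0P[q] : (0 < #|fibre i|)%N.
    rewrite lt0n -(eqr_nat algC) card_fibre expf_eq0 /=.
    exact: irr1_neq0.
  by rewrite !inE => /eqP; exists q.
- move=> i j k; rewrite card_fibre_triples natr_sum char_alpha_coef.
  under eq_bigr => q /[!inE] /eqP fq do rewrite prod_coef fq.
  by rewrite sumr_const -mulr_natr card_fibre mulrC.
- move=> i j q q' fqq'; apply/eqP; rewrite -(eqr_nat algC).
  by rewrite !prod_coef fqq'.
Qed.

End Cover.

Theorem mainTheorem3 (gT : finGroupType) (G : {group gT}) (Q : finType)
    (mul : Q -> Q -> Q) (hQ : quasigroup mul) (hord : #|Q| = #|G|) :
  (exists f : Q -> Iirr G, is_balanced_cover mul f) <->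
  (exists S : Iirr G -> {set Q},
     [/\ (forall i j : Iirr G, i != j -> [disjoint S i & S j]),
         (forall i : Iirr G, (#|S i|)%:R = 'chi_i 1%g ^+ 2) &
         (forall (i j : Iirr G) (q : Q),
            (prod_mult mul (S i) (S j) q)%:R
            = \sum_(k : Iirr G) char_coef i j k * (q \in S k)%:R)]).
Proof.
split=> [[f f_balanced] | [S [S_disjoint card_S prod_S]]].
  exists (fun i => f @^-1: [set i]); split.
  - exact: disjoint_fibres.
  - by case: f_balanced => -[].
  - by move=> i j q; rewrite sum_fibre_indicator balanced_cover_prod_mult.
have card_sum : (\sum_i #|S i|)%N = #|Q|.
  apply/eqP; rewrite -(eqr_nat algC) natr_sum hord -irr_sum_square.
  by apply/eqP/eq_bigr => i _; rewrite card_S.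
have [f fS] := partition_fibres S_disjoint (partition_cover_card S_disjoint card_sum).
exists f; apply: prod_mult_balanced_cover => // [i | i j q]; rewrite !fS //.
rewrite prod_S -(sum_fibre_indicator f).
by apply: eq_bigr => k _; rewrite fS.
Qed.
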